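(* For all odd integers $n\ge1$ and real numbers $a\ge1$, $x\in(-1,1)$, we have $\Lambda_{n,a}(x)\ge 2(1+x)$. Equality holds if and only if $n=1$, $a=1$ (any $x$), or $n=3$, $a=1$, $x=0$.
   Context: $U_j$ denotes the Chebyshev polynomial of the second kind of degree $j$, i.e. $U_j(\cos t)=\sin((j+1)t)/\sin t$. For a real number $a$ and integers $0\le m$, $\binom{m+a}{m}=\frac{(a+1)(a+2)\cdots(a+m)}{m!}$ (equal to $1$ when $m=0$). For an integer $n\ge0$, $\Lambda_{n,a}(x)=\sum_{j=0}^n\binom{n+a-j}{n-j}U_j(x)$. *)

From Stdlib Require Import Reals.
Open Scope R_scope.

(* Chebyshev polynomial of the second kind, via the standard recurrence
   U_0 = 1, U_1 = 2x, U_{j+2} = 2x U_{j+1} - U_j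
   (equivalently U_j(cos t) = sin((j+1)t)/sin t). *)
Fixpoint chebU (j : nat) (x : R) : R :=
  match j with
  | O => 1
  | S j' =>
      match j' with
      | O => 2 * x
      | S j'' => 2 * x * chebU j' x - chebU j'' x
      end
  end.

(* gbinom m a = binom(m+a, m) = (a+1)(a+2)...(a+m)/m!  (= 1 for m = 0). *)
Fixpoint gbinom (m : nat) (a : R) : R :=
  match m with
  | O => 1
  | S m' => gbinom m' a * (a + INR (S m')) / INR (S m')
  end.

Definition Lambda (n : nat) (a x : R) : R :=
  sum_f_R0 (fun j => gbinom (n - j) a * chebU j x) n.

(* Two summations by parts, using the Pascal rule
   binom(m+a, m) = binom(m+a-1, m-1) + binom(m+a-1, m), give
   Lambda_{n,a} = sum_j binom(n-j+a-2, n-j) P_j with P_j the double partial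
   sums of U, and the coefficients are >= 0 for a >= 1.  The double sums have
   the closed form 2(1-x) P_j = j + 2 - U_{j+1}(x).  Keeping only the last two
   terms gives Lambda_{n,a} >= P_n + (a-1) P_{n-1}, and for odd n the bound
   P_n >= 2(1+x) reduces to n + 2 - U_{n+1} >= 4(1-x^2), which follows from
   U_{j+2} - U_j <= 2 on [-1,1].  Equality forces a = 1 and zero slack, which
   happens exactly for n = 1, and for n = 3 at x = 0. *)
From Stdlib Require Import Reals Lia Lra Psatz.
Open Scope R_scope.

Definition conv (f g : nat -> R) (n : nat) : R :=
  sum_f_R0 (fun j => f (n - j)%nat * g j) n.

Lemma sum_f_R0_rev (h : nat -> R) (n : nat) :
  sum_f_R0 h n = sum_f_R0 (fun j => h (n - j)%nat) n.
Proof.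
  induction n as [|n IHn]; [reflexivity|].
  rewrite tech5, IHn, (decomp_sum _ (S n)) by lia.
  simpl pred. rewrite Nat.sub_0_r. simpl. ring.
Qed.

Lemma conv_comm (f g : nat -> R) (n : nat) : conv f g n = conv g f n.
Proof.
  unfold conv. rewrite sum_f_R0_rev. apply sum_eq. intros i Hi.
  replace (n - (n - i))%nat with i by lia. ring.
Qed.

Lemma conv_S (b e u : nat -> R) :
  b 0%nat = e 0%nat -> (forall m, b (S m) = b m + e (S m)) ->
  forall n, conv b u (S n) = conv b u n + conv e u (S n).
Proof.
  intros b_0 b_S n. unfold conv. rewrite !tech5, Nat.sub_diag, b_0.
  assert (split_sum : sum_f_R0 (fun j => b (S n - j)%nat * u j) n =
    sum_f_R0 (fun j => b (n - j)%nat * u j) n +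
    sum_f_R0 (fun j => e (S n - j)%nat * u j) n).
  { rewrite <- sum_plus. apply sum_eq. intros i Hi.
    replace (S n - i)%nat with (S (n - i)) by lia. rewrite b_S. ring. }
  rewrite split_sum. ring.
Qed.

Lemma conv_by_parts (b e u : nat -> R) :
  b 0%nat = e 0%nat -> (forall m, b (S m) = b m + e (S m)) ->
  forall n, conv b u n = conv e (fun k => sum_f_R0 u k) n.
Proof.
  intros b_0 b_S n. induction n as [|n IHn].
  - unfold conv. simpl. rewrite b_0. ring.
  - rewrite (conv_S b e u b_0 b_S), IHn, (conv_comm e (fun k => sum_f_R0 u k) (S n)).
    rewrite (conv_S (fun k => sum_f_R0 u k) u e); [| reflexivity | intro; apply tech5].
    rewrite (conv_comm _ e n), (conv_comm u e). ring.
Qed.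

Lemma gbinom_mul (m : nat) (a : R) :
  gbinom m a * a = gbinom m (a - 1) * (a + INR m).
Proof.
  induction m as [|m IHm]; [simpl; ring|].
  cbn [gbinom]. rewrite S_INR.
  assert (Hm : INR m + 1 <> 0) by (pose proof (pos_INR m); lra).
  replace (gbinom m a * (a + (INR m + 1)) / (INR m + 1) * a) with
    (gbinom m a * a * (a + (INR m + 1)) / (INR m + 1)) by (field; exact Hm).
  rewrite IHm. field. exact Hm.
Qed.

Lemma gbinom_pascal (m : nat) (a : R) :
  gbinom (S m) a = gbinom m a + gbinom (S m) (a - 1).
Proof.
  cbn [gbinom]. rewrite S_INR.
  assert (Hm : INR m + 1 <> 0) by (pose proof (pos_INR m); lra).
  replace (gbinom m (a - 1) * (a - 1 + (INR m + 1))) with (gbinom m a * a)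
    by (rewrite gbinom_mul; ring).
  field. exact Hm.
Qed.

Lemma gbinom_ge0 (m : nat) (a : R) : -1 <= a -> 0 <= gbinom m a.
Proof.
  intro Ha. induction m as [|m IHm]; [simpl; lra|].
  cbn [gbinom]. rewrite S_INR. pose proof (pos_INR m).
  apply Rmult_le_pos; [apply Rmult_le_pos; lra|].
  left. apply Rinv_0_lt_compat. lra.
Qed.

Lemma gbinom_1 (a : R) : gbinom 1 a = a + 1.
Proof. simpl. field. Qed.

Lemma gbinom_S_m1 (m : nat) : gbinom (S m) (-1) = 0.
Proof.
  induction m as [|m IHm]; [simpl; field|].
  cbn [gbinom] in *. rewrite IHm. unfold Rdiv. ring.
Qed.

Lemma sum_f_R0_ge_last (f : nat -> R) (N : nat) :
  (forall i, 0 <= f i) -> f N <= sum_f_R0 f N.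
Proof.
  intro Hf. destruct N as [|N]; [simpl; lra|].
  rewrite tech5. pose proof (cond_pos_sum f N Hf). lra.
Qed.

Definition chebU_dsum (n : nat) (x : R) : R :=
  sum_f_R0 (fun k => sum_f_R0 (fun j => chebU j x) k) n.

Section ChebyshevU.
Variable x : R.
Notation U j := (chebU j x).

Lemma chebU_SS (j : nat) : U (S (S j)) = 2 * x * U (S j) - U j.
Proof. reflexivity. Qed.

Lemma chebU_invariant (j : nat) : U j ^ 2 - 2 * x * U j * U (S j) + U (S j) ^ 2 = 1.
Proof. induction j as [|j IHj]; [simpl; ring|]. rewrite chebU_SS. nra. Qed.

Lemma chebU_SS_sub_le (j : nat) : -1 <= x <= 1 -> U (S (S j)) - U j <= 2.
Proof.
  intro Hx.
  (* (U_{j+2} - U_j)^2 = 4 (1 - (1-x^2) U_{j+1}^2) by the invariant *)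
  assert (Hsq : (U (S (S j)) - U j) ^ 2 <= 4).
  { pose proof (chebU_invariant j). rewrite chebU_SS.
    assert (0 <= (1 - x ^ 2) * U (S j) ^ 2) by (apply Rmult_le_pos; nra).
    nra. }
  nra.
Qed.

Lemma chebU_S_lt (k : nat) : -1 < x < 1 -> U (S k) < INR k + 2.
Proof.
  intro Hx.
  assert (two_steps : forall k, U (S k) < INR k + 2 /\ U (S (S k)) < INR k + 3).
  { intro i. induction i as [|i [IH1 IH2]].
    - simpl. split; [lra|]. assert (x * x < 1) by nra. lra.
    - pose proof (chebU_SS_sub_le (S i) ltac:(lra)). rewrite S_INR. lra. }
  apply two_steps.
Qed.

Lemma chebU_sum (k : nat) :
  2 * (1 - x) * sum_f_R0 (fun j => U j) k = 1 + U k - U (S k).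
Proof.
  induction k as [|k IHk]; [simpl; ring|].
  rewrite tech5, Rmult_plus_distr_l, IHk, chebU_SS. ring.
Qed.

Lemma chebU_dsum_closed (n : nat) :
  2 * (1 - x) * chebU_dsum n x = INR n + 2 - U (S n).
Proof.
  unfold chebU_dsum. induction n as [|n IHn]; [simpl; ring|].
  rewrite tech5, Rmult_plus_distr_l, IHn, chebU_sum, chebU_SS, S_INR. ring.
Qed.

Lemma chebU_dsum_pos (n : nat) : -1 < x < 1 -> 0 < chebU_dsum n x.
Proof.
  intro Hx. pose proof (chebU_dsum_closed n). pose proof (chebU_S_lt n Hx).
  apply (Rmult_lt_reg_l (2 * (1 - x))); lra.
Qed.

Definition chebU_defect (j : nat) : R := INR j + 1 - U j - 4 * (1 - x ^ 2).

Lemma chebU_defect_SS (j : nat) :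
  -1 <= x <= 1 -> chebU_defect j <= chebU_defect (S (S j)).
Proof.
  intro Hx. unfold chebU_defect. pose proof (chebU_SS_sub_le j Hx). rewrite !S_INR. lra.
Qed.

Lemma chebU_defect_2 : chebU_defect 2 = 0.
Proof. unfold chebU_defect. simpl. ring. Qed.

Lemma chebU_defect_4 : chebU_defect 4 = 16 * x ^ 2 * (1 - x ^ 2).
Proof. unfold chebU_defect. simpl. ring. Qed.

Lemma chebU_defect_6_pos : -1 < x < 1 -> 0 < chebU_defect 6.
Proof.
  intro Hx.
  replace (chebU_defect 6) with ((1 - x ^ 2) * (64 * x ^ 4 - 16 * x ^ 2 + 4))
    by (unfold chebU_defect; simpl; ring).
  apply Rmult_lt_0_compat; nra.
Qed.

Lemma chebU_defect_even_ge0 (m : nat) : -1 < x < 1 -> 0 <= chebU_defect (2 * m + 2).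
Proof.
  intro Hx. induction m as [|m IHm]; [simpl; rewrite chebU_defect_2; lra|].
  replace (2 * S m + 2)%nat with (S (S (2 * m + 2))) by lia.
  pose proof (chebU_defect_SS (2 * m + 2) ltac:(lra)). lra.
Qed.

Lemma chebU_defect_even_eq0 (m : nat) : -1 < x < 1 ->
  chebU_defect (2 * m + 2) = 0 <-> m = 0%nat \/ (m = 1%nat /\ x = 0).
Proof.
  intro Hx. split.
  - intro H0. destruct m as [|[|m]]; [now left | right |].
    + split; [reflexivity|]. simpl in H0. rewrite chebU_defect_4 in H0.
      assert (x ^ 2 = 0) by (apply (Rmult_eq_reg_r (16 * (1 - x ^ 2))); nra).
      nra.
    + exfalso.
      assert (Hpos : forall q, 0 < chebU_defect (2 * q + 6)).
      { intro q. induction q as [|q IHq]; [exact (chebU_defect_6_pos Hx)|].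
        replace (2 * S q + 6)%nat with (S (S (2 * q + 6))) by lia.
        pose proof (chebU_defect_SS (2 * q + 6) ltac:(lra)). lra. }
      replace (2 * S (S m) + 2)%nat with (2 * m + 6)%nat in H0 by lia.
      pose proof (Hpos m). lra.
  - intros [-> | [-> Hx0]]; [exact chebU_defect_2|].
    simpl. rewrite chebU_defect_4, Hx0. ring.
Qed.

Lemma chebU_dsum_odd_defect (m : nat) :
  2 * (1 - x) * (chebU_dsum (2 * m + 1) x - 2 * (1 + x)) = chebU_defect (2 * m + 2).
Proof.
  rewrite Rmult_minus_distr_l, chebU_dsum_closed. unfold chebU_defect.
  replace (S (2 * m + 1)) with (2 * m + 2)%nat by lia.
  rewrite !plus_INR. simpl. ring.
Qed.

Lemma chebU_dsum_odd_ge (m : nat) : -1 < x < 1 ->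
  2 * (1 + x) <= chebU_dsum (2 * m + 1) x.
Proof.
  intro Hx. pose proof (chebU_dsum_odd_defect m). pose proof (chebU_defect_even_ge0 m Hx).
  assert (0 <= chebU_dsum (2 * m + 1) x - 2 * (1 + x)); [|lra].
  apply (Rmult_le_reg_l (2 * (1 - x))); lra.
Qed.

Lemma chebU_dsum_odd_eq (m : nat) : -1 < x < 1 ->
  chebU_dsum (2 * m + 1) x = 2 * (1 + x) <-> m = 0%nat \/ (m = 1%nat /\ x = 0).
Proof.
  intro Hx. rewrite <- (chebU_defect_even_eq0 m Hx), <- chebU_dsum_odd_defect.
  split; intro H.
  - rewrite H. ring.
  - apply Rminus_diag_uniq. apply (Rmult_eq_reg_l (2 * (1 - x))); lra.
Qed.

End ChebyshevU.

Lemma Lambda_conv (n : nat) (a x : R) :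
  Lambda n a x = conv (fun i => gbinom i (a - 2)) (fun k => chebU_dsum k x) n.
Proof.
  unfold Lambda, chebU_dsum.
  change (conv (fun i => gbinom i a) (fun j => chebU j x) n =
          conv (fun i => gbinom i (a - 2))
               (fun k => sum_f_R0 (fun k0 => sum_f_R0 (fun j => chebU j x) k0) k) n).
  rewrite (conv_by_parts _ (fun i => gbinom i (a - 1))); [| reflexivity | intro; apply gbinom_pascal].
  rewrite (conv_by_parts _ (fun i => gbinom i (a - 1 - 1))); [| reflexivity | intro; apply gbinom_pascal].
  now replace (a - 1 - 1) with (a - 2) by ring.
Qed.

Lemma Lambda_ge (k : nat) (a x : R) : 1 <= a -> -1 < x < 1 ->
  chebU_dsum (S k) x + (a - 1) * chebU_dsum k x <= Lambda (S k) a x.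
Proof.
  intros Ha Hx. rewrite Lambda_conv. unfold conv. rewrite tech5, Nat.sub_diag.
  assert (Hterm : forall i, 0 <= gbinom (S k - i) (a - 2) * chebU_dsum i x).
  { intro i. apply Rmult_le_pos; [apply gbinom_ge0; lra | left; apply chebU_dsum_pos, Hx]. }
  pose proof (sum_f_R0_ge_last _ k Hterm) as Hlast. cbv beta in Hlast.
  replace (S k - k)%nat with 1%nat in Hlast by lia.
  rewrite gbinom_1 in Hlast. cbn [gbinom]. lra.
Qed.

Lemma Lambda_a1 (n : nat) (x : R) : Lambda n 1 x = chebU_dsum n x.
Proof.
  rewrite Lambda_conv. unfold conv. destruct n as [|n]; [simpl; ring|].
  rewrite tech5, Nat.sub_diag.
  replace (sum_f_R0 _ n) with (sum_f_R0 (fun _ => 0) n).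
  - rewrite sum_cte. simpl gbinom. ring.
  - apply sum_eq. intros i Hi.
    replace (S n - i)%nat with (S (n - i)) by lia.
    replace (1 - 2) with (-1) by ring. rewrite gbinom_S_m1. ring.
Qed.

Theorem theorem4p2 :
  forall (n : nat) (a x : R),
    Nat.Odd n -> 1 <= a -> -1 < x < 1 ->
    Lambda n a x >= 2 * (1 + x) /\
    (Lambda n a x = 2 * (1 + x) <->
       ((n = 1%nat /\ a = 1) \/ (n = 3%nat /\ a = 1 /\ x = 0))).
Proof.
  intros n a x [m ->] Ha Hx.
  pose proof (Lambda_ge (2 * m) a x Ha Hx) as Hlow.
  replace (S (2 * m)) with (2 * m + 1)%nat in Hlow by lia.
  pose proof (chebU_dsum_odd_ge x m Hx) as Hodd.
  pose proof (chebU_dsum_pos x (2 * m) Hx) as Hpos.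
  assert (0 <= (a - 1) * chebU_dsum (2 * m) x) by (apply Rmult_le_pos; lra).
  split; [lra|].
  transitivity (a = 1 /\ (m = 0%nat \/ (m = 1%nat /\ x = 0))).
  - rewrite <- (chebU_dsum_odd_eq x m Hx). split.
    + intro Heq. assert (Ha1 : a = 1) by nra.
      split; [exact Ha1|]. subst a. now rewrite <- Lambda_a1.
    + intros [-> Heq]. now rewrite Lambda_a1.
  - split; intuition lia.
Qed.
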